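(* Let $p$ be a prime. There is no symmetric triple of the form $\{p, p+2, p+6\}$. Moreover, if $\{p, p+4, p+6\}$ is a symmetric triple, then $p \equiv 1 \pmod{12}$.
   Context: Two distinct primes $p$ and $q$ form a symmetric pair if $\gcd(p-1, q-1) = |p-q|$. A symmetric triple is a set of three primes such that any two of them form a symmetric pair. *)

From mathcomp Require Import all_boot.
Set Implicit Arguments. Unset Strict Implicit. Unset Printing Implicit Defensive.

Definition absdiff (p q : nat) : nat := (p - q) + (q - p).

Definition symmetric_pair (p q : nat) : Prop :=
  [/\ prime p, prime q, p <> q & gcdn p.-1 q.-1 = absdiff p q].

Definition symmetric_triple (a b c : nat) : Prop :=
  [/\ symmetric_pair a b, symmetric_pair a c & symmetric_pair b c].

From mathcomp Require Import all_boot.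
From mathcomp Require Import zify.

Set Implicit Arguments.
Unset Strict Implicit.
Unset Printing Implicit Defensive.

(* If {p, p + d} is a symmetric pair then d = gcd(p - 1, p + d - 1) divides
   p - 1.  With d = 6 this makes p + 2 a multiple of 3 larger than 3, and with
   d = 4 and d = 6 together it makes p - 1 a multiple of lcm(4, 6) = 12. *)

Lemma absdiff_addr (p d : nat) : absdiff p (p + d) = d.
Proof. by rewrite /absdiff; lia. Qed.

Lemma symmetric_pair_addr_dvd (p d : nat) :
  symmetric_pair p (p + d) -> d %| p.-1.
Proof. by case=> _ _ _; rewrite absdiff_addr => <-; exact: dvdn_gcdl. Qed.

Lemma prime_addn2_dvd6_predn (p : nat) :
  prime p -> prime (p + 2) -> ~~ (6 %| p.-1).
Proof.
move=> pr_p pr_p2; apply/negP => dvd6.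
have dvd3 : 3 %| p + 2.
  have -> : p + 2 = p.-1 + 3 by have := prime_gt0 pr_p; lia.
  by rewrite dvdn_addl // (dvdn_trans _ dvd6).
move/(prime_nt_dvdP pr_p2 (isT : 3 != 1)): dvd3 => p2_eq3.
by have := prime_gt1 pr_p; lia.
Qed.

Lemma dvd4_dvd6_predn_mod12 (p : nat) :
  0 < p -> 4 %| p.-1 -> 6 %| p.-1 -> p = 1 %[mod 12].
Proof.
move=> p_gt0 dvd4 dvd6; apply/eqP.
by rewrite eqn_mod_dvd // subn1 -[12]/(lcmn 4 6) dvdn_lcm dvd4.
Qed.

Theorem lemma1 (p : nat) (hp : prime p) :
  ~ symmetric_triple p (p + 2) (p + 6) /\
  (symmetric_triple p (p + 4) (p + 6) -> p = 1 %[mod 12]).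
Proof.
split.
- case=> [[_ pr_p2 _ _] /symmetric_pair_addr_dvd dvd6 _].
  by move/negP: (prime_addn2_dvd6_predn hp pr_p2).
- case=> [/symmetric_pair_addr_dvd dvd4 /symmetric_pair_addr_dvd dvd6 _].
  exact: dvd4_dvd6_predn_mod12 (prime_gt0 hp) dvd4 dvd6.
Qed.
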